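(* Let $\Psi=\{S_j\mid j\in J\}$ be a family of formal power series $S_j:\Sigma^*\to\mathbb{R}^p$ indexed by a finite set $J$. (i) If $\Psi$ admits a stable representation, then $\Psi$ is square summable. (ii) If $\Psi$ is square summable, then every minimal representation of $\Psi$ is stable.
   Context: $\Sigma$ is a finite alphabet, $\Sigma^*$ the set of finite words over $\Sigma$ (including the empty word $\epsilon$). For matrices $A_\sigma$ ($\sigma\in\Sigma$) and $w=\sigma_1\cdots\sigma_k$, write $A_w=A_{\sigma_k}\cdots A_{\sigma_1}$, $A_\epsilon=I$. A representation of $\Psi$ is a tuple $R=(\mathbb{R}^n,\{A_\sigma\}_{\sigma\in\Sigma},B,C)$ with $A_\sigma\in\mathbb{R}^{n\times n}$, $C\in\mathbb{R}^{p\times n}$, $B=\{B_j\in\mathbb{R}^n\mid j\in J\}$, such that $S_j(w)=CA_wB_j$ for all $j\in J$, $w\in\Sigma^*$; its dimension is $n$. $\Psi$ is rational if it has a representation. A representation is minimal if no representation of $\Psi$ has smaller dimension. $R$ is stable if all eigenvalues of $\sum_{\sigma\in\Sigma}A_\sigma^T\otimes A_\sigma^T$ have modulus $<1$. $\Psi$ is square summable if $\sum_{w\in\Sigma^*}\|S_j(w)\|_2^2<\infty$ for every $j\in J$. *)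

(* Stdlib reals (R_scope). Matrices/vectors are plain functions on
   nat indices; only the indices below the stated dimension are meaningful. *)
From Stdlib Require Import Reals List.
Import ListNotations.
Open Scope R_scope.

Fixpoint rsum (n : nat) (f : nat -> R) : R :=
  match n with
  | O => 0
  | S k => rsum k f + f k
  end.

Definition vec := nat -> R.
Definition mat := nat -> nat -> R.

Definition idm : mat := fun i j => if Nat.eqb i j then 1 else 0.
Definition mmul (n : nat) (X Y : mat) : mat :=
  fun i k => rsum n (fun l => X i l * Y l k).
Definition mvec (n : nat) (X : mat) (v : vec) : vec :=
  fun i => rsum n (fun l => X i l * v l).
Definition trm (X : mat) : mat := fun i j => X j i.
(* Kronecker product of two n x n matrices, an (n*n) x (n*n) matrix,
   row/column index (i1*n + i2) <-> pair (i1,i2) *)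
Definition kron (n : nat) (X Y : mat) : mat :=
  fun a b => X (a / n)%nat (b / n)%nat * Y (a mod n)%nat (b mod n)%nat.

(* Alphabet Sigma = {0,...,m-1}; a word is a list of letters.
   The word sigma_1 ... sigma_k is the list [sigma_1; ...; sigma_k]. *)
Definition word_over (m : nat) (w : list nat) : Prop :=
  Forall (fun s => (s < m)%nat) w.

(* A_w = A_{sigma_k} ... A_{sigma_1}, A_eps = I *)
Fixpoint Aw (n : nat) (A : nat -> mat) (w : list nat) : mat :=
  match w with
  | [] => idm
  | s :: w' => mmul n (Aw n A w') (A s)
  end.

(* Family Psi = {S_j | j in J}, J = {0,...,q-1}; S j w : R^p (indices < p).
   (n, A, B, C) is a representation of Psi: A s (s < m) are n x n,
   B j in R^n (j < q), C is p x n, and S_j(w) = C A_w B_j. *)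
Definition is_rep (m p q : nat) (S : nat -> list nat -> vec)
  (n : nat) (A : nat -> mat) (B : nat -> vec) (C : mat) : Prop :=
  forall j w, (j < q)%nat -> word_over m w ->
    forall i, (i < p)%nat ->
      S j w i = mvec n C (mvec n (Aw n A w) (B j)) i.

Definition minimal_rep (m p q : nat) (S : nat -> list nat -> vec)
  (n : nat) (A : nat -> mat) (B : nat -> vec) (C : mat) : Prop :=
  is_rep m p q S n A B C /\
  forall n' A' B' C', is_rep m p q S n' A' B' C' -> (n <= n')%nat.

Definition stab_mat (m n : nat) (A : nat -> mat) : mat :=
  fun a b => rsum m (fun s => kron n (trm (A s)) (trm (A s)) a b).

(* lambda = a + i b is a (complex) eigenvalue of the real N x N matrix M:
   there is a nonzero complex vector x + i y with M (x + i y) = lambda (x + i y). *)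
Definition is_eigenvalue (N : nat) (M : mat) (a b : R) : Prop :=
  exists x y : vec,
    (exists k, (k < N)%nat /\ (x k <> 0 \/ y k <> 0)) /\
    forall i, (i < N)%nat ->
      mvec N M x i = a * x i - b * y i /\
      mvec N M y i = b * x i + a * y i.

Definition stable (m n : nat) (A : nat -> mat) : Prop :=
  forall a b, is_eigenvalue (n * n) (stab_mat m n A) a b -> a * a + b * b < 1.

Definition sqnorm (p : nat) (v : vec) : R := rsum p (fun i => v i * v i).

(* square summable: for every j, the nonnegative series
   sum_{w in Sigma^*} ||S_j(w)||^2 is finite, i.e. its finite partial sums
   (over finite sets of distinct words) are bounded. *)
Definition square_summable (m p q : nat) (S : nat -> list nat -> vec) : Prop :=
  forall j, (j < q)%nat ->
    exists K : R, forall L : list (list nat),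
      NoDup L -> Forall (word_over m) L ->
      fold_right (fun w acc => sqnorm p (S j w) + acc) 0 L <= K.

(* Write M for the stability matrix and <z, u (x) v> for the pairing of z in R^(n*n) with the
   tensor u (x) v. Then <M^k z, u (x) v> is the sum, over the words w of length k, of
   <z, A_w u (x) A_w v>; for z = vec(C^T C) and u = v = B_j this is the sum of |S_j(w)|^2 over
   the words of length k.
   (i) If all eigenvalues of M lie in the open unit disc, every orbit M^k z is absolutely
   summable (split the characteristic polynomial over C and apply Cayley-Hamilton), and so is
   the series of the |S_j(w)|^2.
   (ii) A minimal representation is reachable and observable, since otherwise a coordinate could
   be dropped. Hence every entry of A_w is a linear combination of outputs S_j(u w v)_i and is
   square summable in w. With u, v unit vectors, the identity above then makes every orbit of M
   absolutely summable, which excludes eigenvalues of modulus >= 1. *)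

From Stdlib Require Import Reals List Lra Lia Psatz Classical FinFun.
Import ListNotations.
Open Scope R_scope.

Lemma rsum_ext n f g : (forall i, (i < n)%nat -> f i = g i) -> rsum n f = rsum n g.
Proof.
  induction n; simpl; intros H; auto.
  rewrite IHn by (intros; apply H; lia). rewrite H by lia. reflexivity.
Qed.

Lemma rsum_zero n : rsum n (fun _ => 0) = 0.
Proof. induction n; simpl; [lra | rewrite IHn; lra]. Qed.

Lemma rsum_add n f g : rsum n (fun i => f i + g i) = rsum n f + rsum n g.
Proof. induction n; simpl; [lra | rewrite IHn; lra]. Qed.

Lemma rsum_scal_l n c f : rsum n (fun i => c * f i) = c * rsum n f.
Proof. induction n; simpl; [lra | rewrite IHn; lra]. Qed.

Lemma rsum_scal_r n c f : rsum n (fun i => f i * c) = rsum n f * c.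
Proof. induction n; simpl; [lra | rewrite IHn; lra]. Qed.

Lemma rsum_const n c : rsum n (fun _ => c) = INR n * c.
Proof. induction n; simpl rsum; [simpl; ring | rewrite IHn, S_INR; ring]. Qed.

Lemma rsum_swap n k f :
  rsum n (fun i => rsum k (fun j => f i j)) = rsum k (fun j => rsum n (fun i => f i j)).
Proof.
  induction n; simpl.
  - now rewrite rsum_zero.
  - now rewrite IHn, <- rsum_add.
Qed.

Lemma rsum_le n f g : (forall i, (i < n)%nat -> f i <= g i) -> rsum n f <= rsum n g.
Proof.
  induction n; simpl; intros H; [lra |].
  assert (f n <= g n) by (apply H; lia).
  assert (rsum n f <= rsum n g) by (apply IHn; intros; apply H; lia).
  lra.
Qed.

Lemma rsum_nonneg n f : (forall i, (i < n)%nat -> 0 <= f i) -> 0 <= rsum n f.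
Proof. intros H. rewrite <- (rsum_zero n). now apply rsum_le. Qed.

Lemma rsum_ge_term n f i :
  (forall l, (l < n)%nat -> 0 <= f l) -> (i < n)%nat -> f i <= rsum n f.
Proof.
  induction n; intros H Hi; [lia |]. simpl.
  destruct (Nat.eq_dec i n) as [-> | Hne].
  - assert (0 <= rsum n f) by (apply rsum_nonneg; intros; apply H; lia). lra.
  - assert (f i <= rsum n f) by (apply IHn; intros; try apply H; lia).
    assert (0 <= f n) by (apply H; lia). lra.
Qed.

Lemma rsum_abs n f : Rabs (rsum n f) <= rsum n (fun i => Rabs (f i)).
Proof.
  induction n; simpl.
  - rewrite Rabs_R0; lra.
  - eapply Rle_trans; [apply Rabs_triang | lra].
Qed.

Lemma rsum_split n k f : rsum (n + k) f = rsum n f + rsum k (fun i => f (n + i)%nat).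
Proof.
  induction k; simpl.
  - rewrite Nat.add_0_r; lra.
  - rewrite Nat.add_succ_r; simpl; rewrite IHk; lra.
Qed.

Lemma rsum_delta n i g : (i < n)%nat -> rsum n (fun l => if Nat.eqb l i then g l else 0) = g i.
Proof.
  induction n; intros H; [lia |]. simpl.
  destruct (Nat.eq_dec i n) as [-> | Hne].
  - rewrite Nat.eqb_refl, (rsum_ext _ _ (fun _ => 0)), rsum_zero; [lra |].
    intros l Hl. destruct (Nat.eqb_spec l n); [lia | auto].
  - rewrite IHn by lia. destruct (Nat.eqb_spec n i); [lia | lra].
Qed.

Lemma rsum_delta_l n i c : (i < n)%nat ->
  rsum n (fun j => (if Nat.eqb i j then 1 else 0) * c j) = c i.
Proof.
  intros H. rewrite <- (rsum_delta n i c H). apply rsum_ext; intros j _.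
  rewrite Nat.eqb_sym. destruct (Nat.eqb j i); ring.
Qed.

Lemma divmod_pair n i j : (j < n)%nat -> ((i * n + j) / n = i /\ (i * n + j) mod n = j)%nat.
Proof.
  intros H. split.
  - rewrite Nat.div_add_l, Nat.div_small by lia. lia.
  - rewrite Nat.add_comm, Nat.Div0.mod_add. now apply Nat.mod_small.
Qed.

Lemma divmod_lt n a : (a < n * n)%nat -> (a / n < n)%nat /\ (a mod n < n)%nat.
Proof.
  intros H. assert (n <> 0%nat) by (intros ->; simpl in H; lia).
  split; [apply Nat.Div0.div_lt_upper_bound; lia | now apply Nat.mod_upper_bound].
Qed.

Lemma rsum_pairs n k f :
  rsum (k * n) f = rsum k (fun i => rsum n (fun j => f (i * n + j)%nat)).
Proof. induction k; simpl; auto. now rewrite Nat.add_comm, rsum_split, IHk. Qed.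

Lemma rsum_pairs_mul n g h :
  rsum (n * n) (fun a => g (a / n)%nat * h (a mod n)%nat) = rsum n g * rsum n h.
Proof.
  rewrite rsum_pairs, <- rsum_scal_r. apply rsum_ext; intros i Hi.
  rewrite <- rsum_scal_l. apply rsum_ext; intros j Hj.
  destruct (divmod_pair n i j Hj) as [-> ->]. lra.
Qed.

Definition dot (n : nat) (x y : vec) : R := rsum n (fun l => x l * y l).

Definition unitv (a : nat) : vec := fun i => if Nat.eqb i a then 1 else 0.

Lemma dot_comm n x y : dot n x y = dot n y x.
Proof. unfold dot; apply rsum_ext; intros; ring. Qed.

Lemma dot_ext n x x' y y' :
  (forall i, (i < n)%nat -> x i = x' i) -> (forall i, (i < n)%nat -> y i = y' i) ->
  dot n x y = dot n x' y'.
Proof. intros H1 H2; unfold dot; apply rsum_ext; intros; now rewrite H1, H2. Qed.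

Lemma dot_lincomb_r n z a b x y :
  dot n z (fun i => a * x i + b * y i) = a * dot n z x + b * dot n z y.
Proof. unfold dot. rewrite <- !rsum_scal_l, <- rsum_add. apply rsum_ext; intros; ring. Qed.

Lemma dot_unitv n a y : (a < n)%nat -> dot n (unitv a) y = y a.
Proof.
  intros H. unfold dot, unitv. rewrite <- (rsum_delta n a y H).
  apply rsum_ext; intros l _. destruct (Nat.eqb l a); ring.
Qed.

Lemma mvec_ext n X x y :
  (forall i, (i < n)%nat -> x i = y i) -> forall j, mvec n X x j = mvec n X y j.
Proof. intros H j. unfold mvec. apply rsum_ext; intros; now rewrite H. Qed.

Lemma mvec_lincomb n X a b x y i :
  mvec n X (fun j => a * x j + b * y j) i = a * mvec n X x i + b * mvec n X y i.
Proof. apply dot_lincomb_r. Qed.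

Lemma mvec_mmul n n' X Y v i :
  mvec n' (fun i k => rsum n (fun l => X i l * Y l k)) v i = mvec n X (mvec n' Y v) i.
Proof.
  unfold mvec.
  rewrite (rsum_ext n' _ (fun l => rsum n (fun l0 => X i l0 * Y l0 l * v l)))
    by (intros; now rewrite <- rsum_scal_r).
  rewrite rsum_swap. apply rsum_ext; intros.
  rewrite <- rsum_scal_l. apply rsum_ext; intros; ring.
Qed.

Lemma mvec_idm n x i : (i < n)%nat -> mvec n idm x i = x i.
Proof.
  intros H. unfold mvec, idm. rewrite <- (rsum_delta_l n i x H).
  apply rsum_ext; intros; ring.
Qed.

Lemma dot_mvec_trm n X y z : dot n (mvec n (trm X) y) z = dot n y (mvec n X z).
Proof.
  unfold dot, mvec, trm.
  rewrite (rsum_ext n _ (fun l => rsum n (fun l0 => X l0 l * y l0 * z l)))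
    by (intros; now rewrite <- rsum_scal_r).
  rewrite rsum_swap. apply rsum_ext; intros.
  rewrite <- rsum_scal_l. apply rsum_ext; intros; ring.
Qed.

Fixpoint act (n : nat) (A : nat -> mat) (w : list nat) (x : vec) : vec :=
  match w with
  | [] => x
  | s :: w' => act n A w' (mvec n (A s) x)
  end.

Definition trmA (A : nat -> mat) : nat -> mat := fun s => trm (A s).

Lemma act_ext n A w x y :
  (forall i, (i < n)%nat -> x i = y i) -> forall i, (i < n)%nat -> act n A w x i = act n A w y i.
Proof.
  revert x y; induction w as [| s w IH]; simpl; intros x y H i Hi; auto.
  apply IH; auto. intros; now apply mvec_ext.
Qed.

Lemma act_lincomb n A w a b x y i : (i < n)%nat ->
  act n A w (fun j => a * x j + b * y j) i = a * act n A w x i + b * act n A w y i.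
Proof.
  revert x y; induction w as [| s w IH]; simpl; intros x y Hi; auto.
  rewrite <- IH by auto. apply act_ext; auto. intros; apply mvec_lincomb.
Qed.

Lemma act_app n A u v x : act n A (u ++ v) x = act n A v (act n A u x).
Proof. revert x; induction u; simpl; auto. Qed.

Lemma mvec_Aw n A w x i : (i < n)%nat -> mvec n (Aw n A w) x i = act n A w x i.
Proof.
  revert x i; induction w as [| s w IH]; simpl; intros x i Hi.
  - now apply mvec_idm.
  - unfold mmul. rewrite mvec_mmul. now apply IH.
Qed.

Lemma dot_act_trmA n A v y z : dot n (act n (trmA A) v y) z = dot n y (act n A (rev v) z).
Proof.
  revert y z; induction v as [| s v IH]; intros y z; simpl; auto.
  rewrite IH, act_app. apply dot_mvec_trm.
Qed.

Lemma word_over_app m u v : word_over m u -> word_over m v -> word_over m (u ++ v).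
Proof. intros; now apply Forall_app. Qed.

Lemma word_over_rev m w : word_over m w -> word_over m (rev w).
Proof. apply Forall_rev. Qed.

Lemma rep_act m p q S n A B C j w i : is_rep m p q S n A B C ->
  (j < q)%nat -> word_over m w -> (i < p)%nat -> S j w i = mvec n C (act n A w (B j)) i.
Proof. intros HR Hj Hw Hi. rewrite HR by auto. apply mvec_ext. intros; now apply mvec_Aw. Qed.

Definition fsum {T} (L : list T) (f : T -> R) : R := fold_right (fun w acc => f w + acc) 0 L.

Lemma fsum_app {T} (L1 L2 : list T) f : fsum (L1 ++ L2) f = fsum L1 f + fsum L2 f.
Proof. induction L1; simpl; [lra | rewrite IHL1; lra]. Qed.

Lemma fsum_map {T U} (L : list T) (h : T -> U) f : fsum (map h L) f = fsum L (fun x => f (h x)).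
Proof. induction L; simpl; auto. now rewrite IHL. Qed.

Lemma fsum_flat_map {T U} (L : list T) (h : T -> list U) f :
  fsum (flat_map h L) f = fsum L (fun x => fsum (h x) f).
Proof. induction L; simpl; auto. now rewrite fsum_app, IHL. Qed.

Lemma fsum_ext {T} (L : list T) f g : (forall x, In x L -> f x = g x) -> fsum L f = fsum L g.
Proof. induction L; simpl; intros H; auto. rewrite H, IHL; auto. Qed.

Lemma fsum_le {T} (L : list T) f g : (forall x, In x L -> f x <= g x) -> fsum L f <= fsum L g.
Proof.
  induction L; simpl; intros H; [lra |].
  assert (f a <= g a) by auto. assert (fsum L f <= fsum L g) by auto. lra.
Qed.

Lemma fsum_nonneg {T} (L : list T) f : (forall x, 0 <= f x) -> 0 <= fsum L f.
Proof. induction L; simpl; intros H; [lra |]. specialize (IHL H). specialize (H a). lra. Qed.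

Lemma fsum_scal_l {T} (L : list T) c f : fsum L (fun x => c * f x) = c * fsum L f.
Proof. induction L; simpl; [lra | rewrite IHL; lra]. Qed.

Lemma fsum_add {T} (L : list T) f g : fsum L (fun x => f x + g x) = fsum L f + fsum L g.
Proof. induction L; simpl; [lra | rewrite IHL; lra]. Qed.

Lemma fsum_abs {T} (L : list T) f : Rabs (fsum L f) <= fsum L (fun x => Rabs (f x)).
Proof.
  induction L; simpl.
  - rewrite Rabs_R0; lra.
  - eapply Rle_trans; [apply Rabs_triang | lra].
Qed.

Lemma fsum_rsum {T} (L : list T) N g :
  fsum L (fun w => rsum N (g w)) = rsum N (fun a => fsum L (fun w => g w a)).
Proof.
  induction L; simpl.
  - now rewrite rsum_zero.
  - now rewrite IHL, rsum_add.
Qed.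

Lemma rsum_fsum_seq N g : rsum N g = fsum (seq 0 N) g.
Proof. induction N; auto. rewrite seq_S, fsum_app, <- IHN. simpl; lra. Qed.

Lemma fsum_incl {T} (L L' : list T) f : (forall x, 0 <= f x) -> NoDup L ->
  incl L L' -> fsum L f <= fsum L' f.
Proof.
  revert L'; induction L as [| a L IH]; intros L' Hf HN Hi; simpl.
  - now apply fsum_nonneg.
  - destruct (in_split a L') as [l1 [l2 ->]]; [apply Hi; now left |].
    inversion HN; subst.
    assert (fsum L f <= fsum (l1 ++ l2) f).
    { apply IH; auto. intros x Hx.
      assert (Hx' : In x (l1 ++ a :: l2)) by (apply Hi; now right).
      apply in_app_or in Hx'. apply in_or_app.
      destruct Hx' as [? | [-> | ?]]; auto. contradiction. }
    rewrite fsum_app in *. simpl. lra.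
Qed.

Fixpoint words (m k : nat) : list (list nat) :=
  match k with
  | O => [[]]
  | S k' => flat_map (fun s => map (cons s) (words m k')) (seq 0 m)
  end.

Fixpoint words_upto (m K : nat) : list (list nat) :=
  match K with
  | O => []
  | S K' => words_upto m K' ++ words m K'
  end.

Lemma words_spec m k w : In w (words m k) <-> (length w = k /\ word_over m w).
Proof.
  revert w; induction k as [| k IH]; intros w; simpl.
  - split.
    + intros [<- | []]. split; auto. constructor.
    + intros [H _]. destruct w; simpl in H; [now left | lia].
  - rewrite in_flat_map. split.
    + intros [s [Hs Hw]]. apply in_map_iff in Hw. destruct Hw as [w' [<- Hw']].
      apply IH in Hw'. destruct Hw' as [Hl Ho]. apply in_seq in Hs.
      split; simpl; auto. constructor; auto; lia.
    + intros [Hl Ho]. destruct w as [| s w']; simpl in Hl; [lia |].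
      inversion Ho; subst. exists s. split; [apply in_seq; lia |].
      apply in_map. apply IH; auto.
Qed.

Lemma words_NoDup m k : NoDup (words m k).
Proof.
  induction k; simpl.
  - constructor; [intros [] | constructor].
  - generalize (seq_NoDup m 0). generalize (seq 0 m).
    induction l as [| a l IHl]; simpl; intros HN; [constructor |].
    inversion HN; subst. apply NoDup_app; auto.
    + apply Injective_map_NoDup; auto. intros x y E; now injection E.
    + intros w Hw Hw'. apply in_map_iff in Hw. destruct Hw as [w1 [<- _]].
      apply in_flat_map in Hw'. destruct Hw' as [b [Hb Hwb]].
      apply in_map_iff in Hwb. destruct Hwb as [w2 [E _]]. injection E; intros; subst.
      contradiction.
Qed.

Lemma words_upto_spec m K w : In w (words_upto m K) <-> ((length w < K)%nat /\ word_over m w).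
Proof.
  induction K; simpl.
  - split; [intros [] | lia].
  - rewrite in_app_iff, IHK, words_spec. split.
    + intros [[H1 H2] | [H1 H2]]; split; auto; lia.
    + intros [H1 H2]. destruct (Nat.eq_dec (length w) K); [right | left]; split; auto; lia.
Qed.

Lemma words_upto_NoDup m K : NoDup (words_upto m K).
Proof.
  induction K; simpl; [constructor |]. apply NoDup_app; auto using words_NoDup.
  intros w H1 H2. apply words_upto_spec in H1. apply words_spec in H2. lia.
Qed.

Lemma rsum_words m K g : rsum K (fun k => fsum (words m k) g) = fsum (words_upto m K) g.
Proof. induction K; simpl; auto. now rewrite fsum_app, IHK. Qed.

Lemma incl_words_upto m (L : list (list nat)) :
  Forall (word_over m) L -> exists K, incl L (words_upto m K).
Proof.
  induction L as [| w L IH]; intros HL.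
  - exists 0%nat. intros x [].
  - destruct (IH (Forall_inv_tail HL)) as [K HK].
    exists (Nat.max K (S (length w))). intros x [<- | Hx]; apply words_upto_spec.
    + split; [lia | exact (Forall_inv HL)].
    + apply HK, words_upto_spec in Hx. destruct Hx. split; auto; lia.
Qed.

(** * The stability matrix as a sum over words *)

(* [kdot n z u v] is the pairing <z, u (x) v>, with the index convention of [kron]. *)
Definition kdot (n : nat) (z u v : vec) : R :=
  rsum (n * n) (fun a => z a * u (a / n)%nat * v (a mod n)%nat).

Definition gram (p n : nat) (C : mat) : vec :=
  fun a => rsum p (fun i => C i (a / n)%nat * C i (a mod n)%nat).

Lemma kdot_stab_mat m n A z u v :
  kdot n (mvec (n * n) (stab_mat m n A) z) u v =
  rsum m (fun s => kdot n z (mvec n (A s) u) (mvec n (A s) v)).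
Proof.
  unfold kdot, mvec, stab_mat, kron, trm.
  transitivity (rsum (n * n) (fun b => rsum m (fun s => z b *
    (rsum n (fun l => A s (b / n)%nat l * u l) * rsum n (fun l => A s (b mod n)%nat l * v l))))).
  2: { rewrite rsum_swap. apply rsum_ext; intros s _. apply rsum_ext; intros; ring. }
  rewrite (rsum_ext _ _ (fun a => rsum (n * n) (fun b => rsum m (fun s =>
    A s (b / n)%nat (a / n)%nat * A s (b mod n)%nat (a mod n)%nat * z b
      * u (a / n)%nat * v (a mod n)%nat)))).
  2: { intros a _. rewrite <- !rsum_scal_r. apply rsum_ext; intros b _.
       rewrite <- !rsum_scal_r. reflexivity. }
  rewrite rsum_swap. apply rsum_ext; intros b _. rewrite rsum_swap.
  apply rsum_ext; intros s _.
  rewrite <- rsum_pairs_mul, <- rsum_scal_l. apply rsum_ext; intros; ring.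
Qed.

Lemma kdot_stab_iter m n A k z u v :
  kdot n (Nat.iter k (mvec (n * n) (stab_mat m n A)) z) u v =
  fsum (words m k) (fun w => kdot n z (act n A w u) (act n A w v)).
Proof.
  revert u v; induction k as [| k IH]; intros u v; simpl; [lra |].
  rewrite kdot_stab_mat, fsum_flat_map, <- rsum_fsum_seq.
  apply rsum_ext; intros s _. now rewrite IH, fsum_map.
Qed.

Lemma kdot_unitv n z i : (i < n * n)%nat -> kdot n z (unitv (i / n)) (unitv (i mod n)) = z i.
Proof.
  intros Hi. destruct (divmod_lt n i Hi) as [Hd Hm].
  assert (Hn : n <> 0%nat) by lia.
  unfold kdot, unitv. rewrite rsum_pairs.
  rewrite (rsum_ext n _ (fun a1 => if Nat.eqb a1 (i / n) then z (a1 * n + i mod n)%nat else 0)).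
  - rewrite rsum_delta by auto. f_equal. rewrite Nat.mul_comm. symmetry; now apply Nat.div_mod.
  - intros a1 Ha1.
    rewrite (rsum_ext n _ (fun a2 => if Nat.eqb a2 (i mod n) then
        (if Nat.eqb a1 (i / n) then z (a1 * n + a2)%nat else 0) else 0)).
    + now rewrite rsum_delta.
    + intros a2 Ha2. destruct (divmod_pair n a1 a2 Ha2) as [-> ->].
      destruct (Nat.eqb a1 (i / n)), (Nat.eqb a2 (i mod n)); ring.
Qed.

Lemma kdot_gram p n C u : kdot n (gram p n C) u u = sqnorm p (mvec n C u).
Proof.
  unfold kdot, gram, sqnorm, mvec.
  rewrite (rsum_ext _ _ (fun a => rsum p (fun i =>
    (C i (a / n)%nat * u (a / n)%nat) * (C i (a mod n)%nat * u (a mod n)%nat)))).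
  - rewrite rsum_swap. apply rsum_ext; intros i _.
    apply (rsum_pairs_mul n (fun l => C i l * u l) (fun l => C i l * u l)).
  - intros a _. rewrite <- !rsum_scal_r. apply rsum_ext; intros; ring.
Qed.

Lemma kdot_abs_le n z u v : Rabs (kdot n z u v) <=
  rsum (n * n) (fun a => Rabs (z a) * ((u (a / n)%nat) ^ 2 + (v (a mod n)%nat) ^ 2) / 2).
Proof.
  unfold kdot. eapply Rle_trans; [apply rsum_abs |]. apply rsum_le; intros a _.
  rewrite !Rabs_mult, <- (pow2_abs (u _)), <- (pow2_abs (v _)).
  pose proof (Rabs_pos (z a)).
  pose proof (Rle_0_sqr (Rabs (u (a / n)%nat) - Rabs (v (a mod n)%nat))).
  unfold Rsqr in *. nra.
Qed.

Lemma sqnorm_nonneg p v : 0 <= sqnorm p v.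
Proof. unfold sqnorm. apply rsum_nonneg; intros. apply Rle_0_sqr. Qed.

Lemma sq_le_sqnorm p x i : (i < p)%nat -> x i ^ 2 <= sqnorm p x.
Proof.
  intros H. unfold sqnorm. replace (x i ^ 2) with (x i * x i) by ring.
  apply (rsum_ge_term p (fun i => x i * x i)); auto. intros; apply Rle_0_sqr.
Qed.

Lemma kdot_diag_abs_le n z u :
  Rabs (kdot n z u u) <= rsum (n * n) (fun a => Rabs (z a)) * sqnorm n u.
Proof.
  eapply Rle_trans; [apply kdot_abs_le |]. rewrite <- rsum_scal_r. apply rsum_le.
  intros a Ha. destruct (divmod_lt n a Ha) as [H1 H2].
  pose proof (sq_le_sqnorm n u _ H1). pose proof (sq_le_sqnorm n u _ H2).
  pose proof (Rabs_pos (z a)). unfold Rdiv. nra.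
Qed.

Definition schur_stable (N : nat) (M : mat) : Prop :=
  forall a b, is_eigenvalue N M a b -> a * a + b * b < 1.

Definition summable_orbits (N : nat) (M : mat) : Prop :=
  forall z, exists K, forall k,
    rsum k (fun t => rsum N (fun i => Rabs (Nat.iter t (mvec N M) z i))) <= K.

Lemma sqnorm_output_words m p n A C b k :
  fsum (words m k) (fun w => sqnorm p (mvec n C (act n A w b))) =
  kdot n (Nat.iter k (mvec (n * n) (stab_mat m n A)) (gram p n C)) b b.
Proof. rewrite kdot_stab_iter. apply fsum_ext; intros. now rewrite kdot_gram. Qed.

Lemma square_summable_of_summable_orbits m p q S n A B C :
  is_rep m p q S n A B C -> summable_orbits (n * n) (stab_mat m n A) ->
  square_summable m p q S.
Proof.
  intros HR Horb j Hj.
  destruct (Horb (gram p n C)) as [Kc HKc].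
  exists (Kc * sqnorm n (B j)). intros L HN HL.
  destruct (incl_words_upto m L HL) as [K HK].
  change (fsum L (fun w => sqnorm p (S j w)) <= Kc * sqnorm n (B j)).
  rewrite (fsum_ext L _ (fun w => sqnorm p (mvec n C (act n A w (B j))))).
  2: { intros w Hw. unfold sqnorm. apply rsum_ext; intros i Hi.
       rewrite (rep_act m p q S n A B C j w i) by (rewrite ?Forall_forall in HL; auto).
       reflexivity. }
  eapply Rle_trans; [apply fsum_incl; eauto using sqnorm_nonneg |].
  rewrite <- rsum_words.
  eapply Rle_trans; [| apply Rmult_le_compat_r; [apply sqnorm_nonneg | apply (HKc K)]].
  rewrite <- rsum_scal_r. apply rsum_le; intros k _.
  rewrite sqnorm_output_words. eapply Rle_trans; [apply Rle_abs | apply kdot_diag_abs_le].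
Qed.

(** * Minimal representations are reachable and observable *)

Definition skip (k i : nat) : nat := if Nat.ltb i k then i else S i.

Lemma rsum_skip n k f : (k < n)%nat -> rsum n f = f k + rsum (n - 1) (fun i => f (skip k i)).
Proof.
  induction n as [| n IH]; intros Hk; [lia |].
  replace (S n - 1)%nat with n by lia. simpl rsum at 1.
  destruct (Nat.eq_dec k n) as [-> | Hne].
  - rewrite (rsum_ext n (fun i => f (skip n i)) f); [lra |].
    intros i Hi. unfold skip. destruct (Nat.ltb_spec i n); [auto | lia].
  - rewrite IH by lia. destruct n as [| n']; [lia |].
    replace (S n' - 1)%nat with n' by lia. simpl rsum.
    unfold skip at 3. destruct (Nat.ltb_spec n' k); [lia | lra].
Qed.

Section DropUnreachable.
Variables (m p q : nat) (S : nat -> list nat -> vec) (n : nat) (A : nat -> mat)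
  (B : nat -> vec) (C : mat) (phi : vec) (k : nat).
Hypotheses (HR : is_rep m p q S n A B C) (Hk : (k < n)%nat) (Hphi : phi k <> 0)
  (Horth : forall u j, (j < q)%nat -> word_over m u -> dot n phi (act n A u (B j)) = 0).

(* [lift] inverts [drop] on the hyperplane [dot n phi x = 0], solving for coordinate [k]. *)
Let lift : mat := fun l j =>
  if Nat.ltb l k then (if Nat.eqb l j then 1 else 0)
  else if Nat.eqb l k then - phi (skip k j) / phi k
  else (if Nat.eqb (l - 1) j then 1 else 0).
Let drop (x : vec) : vec := fun i => x (skip k i).
Let A' (s : nat) : mat := fun i j => rsum n (fun l => A s (skip k i) l * lift l j).
Let C' : mat := fun i j => rsum n (fun l => C i l * lift l j).

Lemma lift_drop x : dot n phi x = 0 -> forall l, (l < n)%nat -> mvec (n - 1) lift (drop x) l = x l.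
Proof.
  intros H0 l Hl. unfold mvec, lift, drop.
  destruct (Nat.ltb_spec l k).
  - rewrite rsum_delta_l by lia. unfold skip. destruct (Nat.ltb_spec l k); [auto | lia].
  - destruct (Nat.eqb_spec l k) as [-> | Hne].
    + unfold dot in H0. rewrite (rsum_skip n k) in H0 by auto.
      rewrite (rsum_ext _ _ (fun i => (-1 / phi k) * (phi (skip k i) * x (skip k i))))
        by (intros; field; auto).
      rewrite rsum_scal_l. apply Rmult_eq_reg_l with (phi k); auto.
      field_simplify; auto. lra.
    + rewrite rsum_delta_l by lia. unfold skip.
      destruct (Nat.ltb_spec (l - 1) k); [lia |]. f_equal; lia.
Qed.

Lemma act_drop u x : word_over m u ->
  (forall v, word_over m v -> dot n phi (act n A v x) = 0) ->
  forall i, (i < n - 1)%nat -> act (n - 1) A' u (drop x) i = act n A u x (skip k i).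
Proof.
  revert x; induction u as [| s u IH]; intros x Hu Hx i Hi; simpl; auto.
  inversion Hu; subst.
  rewrite (act_ext (n - 1) A' u _ (drop (mvec n (A s) x))); auto.
  - apply IH; auto. intros v Hv. apply (Hx (s :: v)). now constructor.
  - intros i' Hi'. unfold A'.
    rewrite (mvec_mmul n (n - 1) (fun i l => A s (skip k i) l)).
    change (mvec n (A s) (mvec (n - 1) lift (drop x)) (skip k i') = mvec n (A s) x (skip k i')).
    apply mvec_ext; intros. apply lift_drop; auto. apply (Hx []). constructor.
Qed.

Lemma rep_drop_unreachable : is_rep m p q S (n - 1) A' (fun j => drop (B j)) C'.
Proof.
  intros j u Hj Hu i Hi.
  rewrite (rep_act m p q S n A B C j u i HR Hj Hu Hi).
  rewrite (mvec_ext (n - 1) C' _ (act (n - 1) A' u (drop (B j)))) by (intros; now apply mvec_Aw).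
  unfold C'. rewrite mvec_mmul. apply mvec_ext; intros l Hl.
  rewrite (mvec_ext (n - 1) lift _ (drop (act n A u (B j)))).
  - symmetry. apply lift_drop; auto.
  - intros i' Hi'. apply act_drop; auto.
Qed.

End DropUnreachable.

Lemma minimal_reachable m p q S n A B C phi : minimal_rep m p q S n A B C ->
  (forall u j, (j < q)%nat -> word_over m u -> dot n phi (act n A u (B j)) = 0) ->
  forall k, (k < n)%nat -> phi k = 0.
Proof.
  intros [HR Hmin] Horth k Hk. destruct (Req_dec (phi k) 0) as [| Hne]; auto.
  specialize (Hmin _ _ _ _ (rep_drop_unreachable m p q S n A B C phi k HR Hk Hne Horth)).
  lia.
Qed.

Definition dual_series (S : nat -> list nat -> vec) : nat -> list nat -> vec :=
  fun i w j => S j (rev w) i.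

Lemma rep_dual m p q S n A B C : is_rep m p q S n A B C ->
  is_rep m q p (dual_series S) n (trmA A) C B.
Proof.
  intros HR i w Hi Hw j Hj. unfold dual_series.
  rewrite (rep_act m p q S n A B C j (rev w) i HR Hj (word_over_rev m w Hw) Hi).
  rewrite (mvec_ext n B _ (act n (trmA A) w (C i))) by (intros; now apply mvec_Aw).
  change (dot n (C i) (act n A (rev w) (B j)) = dot n (B j) (act n (trmA A) w (C i))).
  now rewrite (dot_comm n (B j)), dot_act_trmA.
Qed.

Lemma minimal_rep_dual m p q S n A B C : minimal_rep m p q S n A B C ->
  minimal_rep m q p (dual_series S) n (trmA A) C B.
Proof.
  intros [HR Hmin]. split; [now apply rep_dual |].
  intros n' A' B' C' HR'. apply (Hmin n' (trmA A') C' B').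
  intros j w Hj Hw i Hi. rewrite <- (rep_dual m q p _ n' A' B' C' HR' j w Hj Hw i Hi).
  unfold dual_series. now rewrite rev_involutive.
Qed.

Lemma minimal_observable m p q S n A B C x : minimal_rep m p q S n A B C ->
  (forall v i, (i < p)%nat -> word_over m v -> mvec n C (act n A v x) i = 0) ->
  forall k, (k < n)%nat -> x k = 0.
Proof.
  intros Hmin Hobs.
  apply (minimal_reachable _ _ _ _ _ _ _ _ x (minimal_rep_dual _ _ _ _ _ _ _ _ Hmin)).
  intros u i Hi Hu. rewrite dot_comm, dot_act_trmA. apply Hobs; auto. now apply word_over_rev.
Qed.

Definition subspace (n : nat) (V : vec -> Prop) : Prop :=
  V (fun _ => 0) /\
  (forall a x y, V x -> V y -> V (fun i => a * x i + y i)) /\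
  (forall x y, (forall i, (i < n)%nat -> x i = y i) -> V x -> V y).

Definition trivial_annihilator (n : nat) (T : vec -> Prop) : Prop :=
  forall phi, (forall t, T t -> dot n phi t = 0) -> forall k, (k < n)%nat -> phi k = 0.

Lemma trivial_annihilator_elim n (T : vec -> Prop) t0 :
  T t0 -> t0 n <> 0 -> trivial_annihilator (S n) T ->
  trivial_annihilator n (fun y => exists t, T t /\ y = fun i => t i - (t n / t0 n) * t0 i).
Proof.
  intros Ht0 Hnz Hann phi' Hphi' k Hk.
  set (phi := fun l => if Nat.ltb l n then phi' l else - dot n phi' t0 / t0 n).
  assert (Hk0 : phi k = 0).
  { apply (Hann phi); [| lia]. intros t Ht.
    assert (Hz : dot n phi' (fun i => 1 * t i + - (t n / t0 n) * t0 i) = 0).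
    { rewrite <- (Hphi' (fun i => t i - (t n / t0 n) * t0 i)) by eauto.
      apply dot_ext; intros; auto; ring. }
    rewrite dot_lincomb_r in Hz.
    unfold dot. simpl rsum. fold (dot n phi t).
    rewrite (dot_ext n phi phi' t t)
      by (intros i Hi; unfold phi; destruct (Nat.ltb_spec i n); [auto | lia]).
    unfold phi. rewrite Nat.ltb_irrefl. field_simplify; auto.
    field_simplify in Hz; auto. lra. }
  unfold phi in Hk0. destruct (Nat.ltb_spec k n); [auto | lia].
Qed.

(* Induction on [n]: eliminate the last coordinate against some [t0] in [T] with [t0 n' <> 0]. *)
Lemma subspace_full n V (T : vec -> Prop) : subspace n V -> (forall t, T t -> V t) ->
  trivial_annihilator n T -> forall x, V x.
Proof.
  revert V T; induction n as [| n' IH]; intros V T [H0 [Hlin Hext]] HT Hann x.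
  { apply (Hext (fun _ => 0)); auto. intros; lia. }
  destruct (classic (exists t0, T t0 /\ t0 n' <> 0)) as [[t0 [Ht0 Hnz]] | Hno].
  2: { assert (E : unitv n' n' = 0).
       { apply (Hann (unitv n')); [| lia]. intros t Ht. rewrite dot_unitv by lia.
         destruct (Req_dec (t n') 0); auto. exfalso; eauto. }
       unfold unitv in E. rewrite Nat.eqb_refl in E. lra. }
  set (elim := fun (y : vec) i => y i - (y n' / t0 n') * t0 i).
  set (trunc := fun (y : vec) i => if Nat.ltb i n' then y i else 0).
  assert (Helim_V : forall y, V y -> V (elim y)).
  { intros y Hy. apply (Hext (fun i => - (y n' / t0 n') * t0 i + y i)); auto.
    intros; unfold elim; ring. }
  assert (Htrunc_elim : forall y i, (i < S n')%nat -> elim y i = trunc (elim y) i).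
  { intros y i Hi. unfold trunc. destruct (Nat.ltb_spec i n'); auto.
    replace i with n' by lia. unfold elim. field; auto. }
  assert (HV' : subspace n' (fun y => V (trunc y))).
  { repeat split.
    - apply (Hext (fun _ => 0)); auto. intros; unfold trunc. now destruct (Nat.ltb i n').
    - intros a y z Hy Hz. apply (Hext (fun i => a * trunc y i + trunc z i)); auto.
      intros; unfold trunc. destruct (Nat.ltb i n'); ring.
    - intros y z Hyz Hy. apply (Hext (trunc y)); auto.
      intros i _; unfold trunc. destruct (Nat.ltb_spec i n'); auto. }
  assert (Hx : V (elim x)).
  { apply (Hext (trunc (elim x))); [intros; symmetry; auto |].
    apply (IH _ (fun y => exists t, T t /\ y = elim t) HV').
    - intros y [t [Ht ->]]. apply (Hext (elim t)); auto.
    - exact (trivial_annihilator_elim n' T t0 Ht0 Hnz Hann). }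
  apply (Hext (fun i => (x n' / t0 n') * t0 i + elim x i)); auto.
  intros; unfold elim; ring.
Qed.

Definition sq_sum_le (m : nat) (g : list nat -> R) (K : R) : Prop :=
  forall W, NoDup W -> Forall (word_over m) W -> fsum W (fun w => g w ^ 2) <= K.

Definition sq_summable (m : nat) (g : list nat -> R) : Prop := exists K, sq_sum_le m g K.

Lemma sq_summable_ext m g g' :
  (forall w, word_over m w -> g w = g' w) -> sq_summable m g -> sq_summable m g'.
Proof.
  intros H [K HK]. exists K. intros W HN HW.
  rewrite (fsum_ext _ _ (fun w => g w ^ 2)); auto.
  intros w Hw. rewrite Forall_forall in HW. now rewrite H by auto.
Qed.

Lemma sq_summable_lincomb m a g1 g2 :
  sq_summable m g1 -> sq_summable m g2 -> sq_summable m (fun w => a * g1 w + g2 w).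
Proof.
  intros [K1 H1] [K2 H2]. exists (2 * a ^ 2 * K1 + 2 * K2). intros W HN HW.
  eapply Rle_trans.
  - apply (fsum_le W _ (fun w => (2 * a ^ 2) * g1 w ^ 2 + 2 * g2 w ^ 2)).
    intros w _. pose proof (pow2_ge_0 (a * g1 w - g2 w)). nra.
  - rewrite fsum_add, !fsum_scal_l. specialize (H1 W HN HW). specialize (H2 W HN HW).
    pose proof (pow2_ge_0 a). nra.
Qed.

Lemma subspace_sq_summable m n (f : vec -> list nat -> R) :
  (forall x y, (forall i, (i < n)%nat -> x i = y i) -> forall w, f x w = f y w) ->
  (forall a x y w, f (fun i => a * x i + y i) w = a * f x w + f y w) ->
  subspace n (fun x => sq_summable m (f x)).
Proof.
  intros Hext Hlin. repeat split.
  - exists 0. intros W _ _. rewrite (fsum_ext W _ (fun _ => 0)).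
    + induction W; simpl; lra.
    + intros w _. rewrite <- (Hext (fun i => -1 * 0 + 0)), Hlin by (intros; ring). simpl; ring.
  - intros a x y Hx Hy. apply (sq_summable_ext m (fun w => a * f x w + f y w)).
    + intros; now rewrite Hlin.
    + now apply sq_summable_lincomb.
  - intros x y Hxy. apply sq_summable_ext. intros; now apply Hext.
Qed.

Lemma subspace_dot_act_l m n A x :
  subspace n (fun eta => sq_summable m (fun w => dot n eta (act n A w x))).
Proof.
  apply subspace_sq_summable.
  - intros; apply dot_ext; auto.
  - intros a eta eta' w. rewrite dot_comm, (dot_comm n eta), (dot_comm n eta').
    rewrite <- (Rmult_1_l (dot n (act n A w x) eta')), <- dot_lincomb_r.
    apply dot_ext; intros; auto; ring.
Qed.

Lemma subspace_dot_act_r m n A eta :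
  subspace n (fun x => sq_summable m (fun w => dot n eta (act n A w x))).
Proof.
  apply subspace_sq_summable.
  - intros x y Hxy w. apply dot_ext; auto. intros; now apply act_ext.
  - intros a x y w. rewrite <- (Rmult_1_l (dot n eta (act n A w y))), <- dot_lincomb_r.
    apply dot_ext; auto. intros. rewrite <- act_lincomb by auto.
    apply act_ext; auto. intros; ring.
Qed.

(** * Square summable series have summable orbits *)

Lemma sq_summable_output m p q S j i u v :
  square_summable m p q S -> (j < q)%nat -> (i < p)%nat -> word_over m u -> word_over m v ->
  sq_summable m (fun w => S j (u ++ w ++ v) i).
Proof.
  intros HSS Hj Hi Hu Hv. destruct (HSS j Hj) as [K HK]. exists K. intros W HN HW.
  eapply Rle_trans.
  - apply (fsum_le W _ (fun w => sqnorm p (S j (u ++ w ++ v)))). intros; now apply sq_le_sqnorm.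
  - rewrite <- (fsum_map W (fun w => u ++ w ++ v) (fun w => sqnorm p (S j w))).
    apply HK.
    + apply Injective_map_NoDup; auto. intros w1 w2 E.
      apply app_inv_head in E. now apply app_inv_tail in E.
    + apply Forall_map. eapply Forall_impl; [| exact HW].
      intros w Hw. now repeat apply word_over_app.
Qed.

(* Reachable vectors span R^n and observable covectors span its dual, and the pairing of a
   reachable vector with an observable covector along a word w is an output of S. *)
Lemma minimal_entries_sq_summable m p q S n A B C :
  square_summable m p q S -> minimal_rep m p q S n A B C ->
  forall x b, (b < n)%nat -> sq_summable m (fun w => act n A w x b).
Proof.
  intros HSS Hmin x b Hb. pose proof Hmin as [HR _].
  assert (Hobs : forall v i, (i < p)%nat -> word_over m v -> forall x,
            sq_summable m (fun w => dot n (act n (trmA A) v (C i)) (act n A w x))).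
  { intros v i Hi Hv.
    apply (subspace_full n _ (fun t => exists u j, (j < q)%nat /\ word_over m u /\
             t = act n A u (B j)) (subspace_dot_act_r m n A _)).
    - intros t [u [j [Hj [Hu ->]]]].
      apply (sq_summable_ext m (fun w => S j (u ++ w ++ rev v) i)).
      + intros w Hw. rewrite dot_act_trmA, <- !act_app.
        apply (rep_act m p q S n A B C); auto.
        repeat apply word_over_app; auto using word_over_rev.
      + apply (sq_summable_output m p q); auto using word_over_rev.
    - intros phi Hphi. apply (minimal_reachable m p q S n A B C phi Hmin).
      intros u j Hj Hu. apply Hphi. eauto. }
  apply (sq_summable_ext m (fun w => dot n (unitv b) (act n A w x))).
  { intros; now apply dot_unitv. }
  apply (subspace_full n _ (fun t => exists v i, (i < p)%nat /\ word_over m v /\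
           t = act n (trmA A) v (C i)) (subspace_dot_act_l m n A x)).
  - intros t [v [i [Hi [Hv ->]]]]. now apply Hobs.
  - intros phi Hphi. apply (minimal_observable m p q S n A B C phi Hmin). intros v i Hi Hv.
    change (dot n (C i) (act n A v phi) = 0).
    rewrite <- (rev_involutive v), <- dot_act_trmA, dot_comm.
    apply Hphi. exists (rev v), i. auto using word_over_rev.
Qed.

Lemma uniform_bound n (P : nat -> R -> Prop) :
  (forall i, (i < n)%nat -> exists K, P i K) -> (forall i K K', P i K -> K <= K' -> P i K') ->
  exists K, forall i, (i < n)%nat -> P i K.
Proof.
  induction n; intros H Hmon.
  - exists 0. intros; lia.
  - destruct IHn as [K1 H1]; auto. destruct (H n) as [K2 H2]; auto.
    exists (Rmax K1 K2). intros i Hi. destruct (Nat.eq_dec i n) as [-> |].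
    + eapply Hmon; eauto. apply Rmax_r.
    + eapply Hmon; [apply H1; lia | apply Rmax_l].
Qed.

Lemma sq_sum_le_mono m g K K' : sq_sum_le m g K -> K <= K' -> sq_sum_le m g K'.
Proof. intros H HK W HN HW. specialize (H W HN HW). lra. Qed.

Definition entries_sq_sum_le (m n : nat) (A : nat -> mat) (K : R) : Prop :=
  forall a, (a < n)%nat -> forall b, (b < n)%nat -> sq_sum_le m (fun w => act n A w (unitv a) b) K.

Lemma entries_uniform_bound m n A :
  (forall x b, (b < n)%nat -> sq_summable m (fun w => act n A w x b)) ->
  exists K, entries_sq_sum_le m n A K.
Proof.
  intros H.
  apply (uniform_bound n (fun a K =>
    forall b, (b < n)%nat -> sq_sum_le m (fun w => act n A w (unitv a) b) K)).
  - intros a Ha.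
    apply (uniform_bound n (fun b K => sq_sum_le m (fun w => act n A w (unitv a) b) K)).
    + intros b Hb. exact (H _ _ Hb).
    + eauto using sq_sum_le_mono.
  - intros a K K' HK HKK' b Hb. eapply sq_sum_le_mono; eauto.
Qed.

Lemma orbit_coordinate_bound m n A K z i0 : (i0 < n * n)%nat ->
  entries_sq_sum_le m n A K ->
  forall k, rsum k (fun t => Rabs (Nat.iter t (mvec (n * n) (stab_mat m n A)) z i0)) <=
            rsum (n * n) (fun c => Rabs (z c)) * K.
Proof.
  intros Hi0 HK k. destruct (divmod_lt n i0 Hi0) as [Hi1 Hi2].
  set (W := words_upto m k).
  assert (HW : Forall (word_over m) W).
  { apply Forall_forall. intros w Hw. now apply words_upto_spec in Hw. }
  eapply Rle_trans.
  { apply rsum_le. intros t _. rewrite <- (kdot_unitv n _ i0 Hi0), kdot_stab_iter.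
    eapply Rle_trans; [apply fsum_abs |]. apply fsum_le. intros w _. apply kdot_abs_le. }
  rewrite rsum_words, fsum_rsum, <- rsum_scal_r. apply rsum_le. intros c Hc.
  destruct (divmod_lt n c Hc) as [Hc1 Hc2].
  rewrite (fsum_ext W _ (fun w =>
      (Rabs (z c) / 2) * (act n A w (unitv (i0 / n)) (c / n)%nat ^ 2)
    + (Rabs (z c) / 2) * (act n A w (unitv (i0 mod n)) (c mod n)%nat ^ 2))) by (intros; field).
  rewrite fsum_add, !fsum_scal_l.
  pose proof (HK _ Hi1 _ Hc1 W (words_upto_NoDup m k) HW).
  pose proof (HK _ Hi2 _ Hc2 W (words_upto_NoDup m k) HW).
  pose proof (Rabs_pos (z c)). nra.
Qed.

Lemma minimal_summable_orbits m p q S n A B C :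
  square_summable m p q S -> minimal_rep m p q S n A B C ->
  summable_orbits (n * n) (stab_mat m n A).
Proof.
  intros HSS Hmin z.
  destruct (entries_uniform_bound m n A (minimal_entries_sq_summable m p q S n A B C HSS Hmin))
    as [K HK].
  exists (INR (n * n) * (rsum (n * n) (fun c => Rabs (z c)) * K)). intros k.
  rewrite rsum_swap, <- rsum_const. apply rsum_le. intros i Hi.
  now apply orbit_coordinate_bound.
Qed.

Lemma eigen_orbit_modulus N M a b x y :
  (forall i, (i < N)%nat -> mvec N M x i = a * x i - b * y i /\ mvec N M y i = b * x i + a * y i) ->
  forall t i, (i < N)%nat ->
    Nat.iter t (mvec N M) x i ^ 2 + Nat.iter t (mvec N M) y i ^ 2 =
    (a * a + b * b) ^ t * (x i ^ 2 + y i ^ 2).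
Proof.
  intros Heig.
  set (X := fun t => Nat.iter t (mvec N M) x). set (Y := fun t => Nat.iter t (mvec N M) y).
  assert (Hstep : forall t i, (i < N)%nat ->
            X (S t) i = a * X t i - b * Y t i /\ Y (S t) i = b * X t i + a * Y t i).
  { induction t as [| t IH]; intros i Hi; [now apply Heig |].
    change (X (S (S t)) i) with (mvec N M (X (S t)) i).
    change (Y (S (S t)) i) with (mvec N M (Y (S t)) i).
    rewrite (mvec_ext N M (X (S t)) (fun j => a * X t j + (- b) * Y t j))
      by (intros j Hj; destruct (IH j Hj) as [E _]; rewrite E; ring).
    rewrite (mvec_ext N M (Y (S t)) (fun j => b * X t j + a * Y t j))
      by (intros j Hj; destruct (IH j Hj) as [_ E]; rewrite E; ring).
    rewrite !mvec_lincomb. change (mvec N M (X t)) with (X (S t)).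
    change (mvec N M (Y t)) with (Y (S t)).
    destruct (IH i Hi) as [E1 E2]. rewrite E1, E2. split; ring. }
  induction t as [| t IH]; intros i Hi; [simpl; ring |].
  change (X (S t) i ^ 2 + Y (S t) i ^ 2 = (a * a + b * b) ^ S t * (x i ^ 2 + y i ^ 2)).
  destruct (Hstep t i Hi) as [E1 E2]. rewrite E1, E2.
  replace ((a * a + b * b) ^ S t) with ((a * a + b * b) * (a * a + b * b) ^ t) by (simpl; ring).
  rewrite Rmult_assoc, <- (IH i Hi). unfold X, Y. ring.
Qed.

Lemma rsum_unbounded eps f D : 0 < eps -> (forall t, eps <= f t) -> exists k, D < rsum k f.
Proof.
  intros Heps Hf. destruct (INR_archimed eps D Heps) as [k Hk]. exists k.
  eapply Rlt_le_trans; [apply Hk |]. rewrite <- rsum_const. apply rsum_le; auto.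
Qed.

(* An eigenvector of modulus >= 1 has an orbit whose [k0]-th coordinates stay away from 0. *)
Lemma schur_stable_of_summable_orbits N M : summable_orbits N M -> schur_stable N M.
Proof.
  intros Horb a b [x [y [[k0 [Hk0 Hnz]] Heig]]].
  destruct (Rlt_or_le (a * a + b * b) 1) as [| Hge]; auto. exfalso.
  destruct (Horb x) as [Kx HKx]. destruct (Horb y) as [Ky HKy].
  set (X := fun t => Nat.iter t (mvec N M) x). set (Y := fun t => Nat.iter t (mvec N M) y).
  set (s := fun t => Rabs (X t k0) + Rabs (Y t k0)).
  set (c0 := x k0 ^ 2 + y k0 ^ 2).
  assert (Hc0 : 0 < c0).
  { unfold c0. pose proof (pow2_ge_0 (x k0)). pose proof (pow2_ge_0 (y k0)).
    rewrite <- !Rsqr_pow2 in *.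
    destruct Hnz as [Hx | Hy]; [pose proof (Rsqr_pos_lt _ Hx) | pose proof (Rsqr_pos_lt _ Hy)];
      lra. }
  assert (Hs0 : forall t, 0 <= s t).
  { intros t. unfold s. pose proof (Rabs_pos (X t k0)). pose proof (Rabs_pos (Y t k0)). lra. }
  assert (Hsum : forall k, rsum k s <= Kx + Ky).
  { intros k. eapply Rle_trans; [| apply Rplus_le_compat; [apply (HKx k) | apply (HKy k)]].
    rewrite <- rsum_add. apply rsum_le; intros t _. unfold s.
    apply Rplus_le_compat;
      [apply (rsum_ge_term N (fun i => Rabs (X t i))) |
       apply (rsum_ge_term N (fun i => Rabs (Y t i)))];
      auto using Rabs_pos. }
  set (D := Kx + Ky).
  assert (Hs_le : forall t, s t <= D).
  { intros t. eapply Rle_trans; [| apply (Hsum (S t))]. apply rsum_ge_term; auto. }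
  assert (Hs_ge : forall t, c0 / (D + 1) <= s t).
  { intros t. specialize (Hs_le t). specialize (Hs0 t).
    assert (Hmod : c0 <= X t k0 ^ 2 + Y t k0 ^ 2).
    { unfold X, Y. rewrite (eigen_orbit_modulus N M a b x y Heig t k0 Hk0).
      pose proof (pow_R1_Rle _ t Hge). fold c0. nra. }
    assert (X t k0 ^ 2 + Y t k0 ^ 2 <= s t * s t).
    { unfold s. rewrite <- (pow2_abs (X t k0)), <- (pow2_abs (Y t k0)).
      pose proof (Rabs_pos (X t k0)). pose proof (Rabs_pos (Y t k0)). nra. }
    apply Rmult_le_reg_r with (D + 1); [lra |].
    unfold Rdiv. rewrite Rmult_assoc, Rinv_l by lra. nra. }
  assert (Heps : 0 < c0 / (D + 1)).
  { apply Rdiv_lt_0_compat; [lra |]. pose proof (Hs0 0%nat). pose proof (Hs_le 0%nat). lra. }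
  destruct (rsum_unbounded _ s D Heps Hs_ge) as [k Hk].
  specialize (Hsum k). fold D in Hsum. lra.
Qed.

(** * Schur stable matrices have summable orbits *)

Set Warnings "-notation-overridden,-ambiguous-paths,-notation-incompatible-prefix".
From HB Require Import structures.
From mathcomp Require Import all_boot all_order all_algebra.
From mathcomp Require Import Rstruct complex.
Set Implicit Arguments. Unset Strict Implicit. Unset Printing Implicit Defensive.
Import Order.TTheory GRing.Theory Num.Theory.

Section Spectral.
Local Open Scope ring_scope.
Local Open Scope complex_scope.

Lemma sum_recursive_bound (F : realFieldType) (a b : nat -> F) (rho K : F) :
  rho < 1 -> (forall k, 0 <= a k) -> (forall k, a k.+1 <= rho * a k + b k) ->
  (forall k, \sum_(t < k) b t <= K) ->
  forall k, \sum_(t < k) a t <= (a 0%N + K) / (1 - rho).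
Proof.
move=> rho_lt1 a_ge0 a_rec b_sum k.
have sum_succ : \sum_(t < k.+1) a t <= a 0%N + (rho * \sum_(t < k) a t + K).
  have step : \sum_(t < k) a t.+1 <= \sum_(t < k) (rho * a t + b t).
    by apply: ler_sum => t _; exact: a_rec.
  rewrite big_ord_recl lerD2l; apply: le_trans step _.
  by rewrite big_split /= -mulr_sumr lerD2l; exact: b_sum.
have sum_mono : \sum_(t < k) a t <= \sum_(t < k.+1) a t.
  by rewrite big_ord_recr /= lerDl.
rewrite ler_pdivlMr ?subr_gt0 // mulrBr mulr1 lerBlDr.
rewrite -addrA [K + _]addrC [_ * rho]mulrC; exact: le_trans sum_mono sum_succ.
Qed.

Variable R : rcfType.

Definition l1norm (N : nat) (v : 'rV[R[i]]_N) : R := \sum_(i < N) Normc.normc (v 0 i).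

Lemma normc_ge0 (z : R[i]) : 0 <= Normc.normc z.
Proof. by case: z => a b; exact: sqrtr_ge0. Qed.

Lemma l1norm_ge0 N (v : 'rV_N) : 0 <= l1norm v.
Proof. by apply: sumr_ge0 => i _; exact: normc_ge0. Qed.

Lemma l1normD N (u v : 'rV_N) : l1norm (u + v) <= l1norm u + l1norm v.
Proof.
by rewrite /l1norm -big_split /=; apply: ler_sum => i _; rewrite mxE; exact: le_normcD.
Qed.

Lemma l1normZ N r (u : 'rV_N) : l1norm (r *: u) = Normc.normc r * l1norm u.
Proof. by rewrite /l1norm mulr_sumr; apply: eq_bigr => i _; rewrite mxE Normc.normcM. Qed.

(* Factor the annihilating polynomial: [v (X - r) X^k] has a bounded l1-sum by induction, and
   [v X^(k+1) = v (X - r) X^k + r v X^k] with [|r| < 1] gives a geometric recursion. *)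
Lemma l1norm_orbit_bounded N (X : 'M[R[i]]_N.+1) (rs : seq R[i]) :
  (forall r, r \in rs -> Normc.normc r < 1) ->
  forall v : 'rV_N.+1, v *m horner_mx X (\prod_(r <- rs) ('X - r%:P)) = 0 ->
  exists K, forall k, \sum_(t < k) l1norm (v *m X ^+ t) <= K.
Proof.
elim: rs => [|r rs IH] rs_lt1 v.
  rewrite big_nil rmorph1 mulmx1 => ->.
  by exists 0 => k; rewrite big1 // => t _; rewrite mul0mx /l1norm big1 // => i _;
     rewrite mxE Normc.normc0.
rewrite big_cons rmorphM /= mulmxA => v_ann.
set w := v *m _ in v_ann.
have [K HK] : exists K, forall k, \sum_(t < k) l1norm (w *m X ^+ t) <= K.
  by apply: IH v_ann => r' r'_in; apply: rs_lt1; rewrite inE r'_in orbT.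
have orbit_step t : v *m X ^+ t.+1 = w *m X ^+ t + r *: (v *m X ^+ t).
  rewrite /w rmorphB /= horner_mx_X horner_mx_C exprS -mulmxE mulmxA mulmxBr.
  by rewrite mul_mx_scalar mulmxBl -scalemxAl subrK.
exists ((l1norm v + K) / (1 - Normc.normc r)) => k.
have := sum_recursive_bound (a := fun t => l1norm (v *m X ^+ t))
  (b := fun t => l1norm (w *m X ^+ t)) _ (fun t => l1norm_ge0 _) _ HK k.
rewrite expr0 mulmx1; apply.
- by apply: rs_lt1; rewrite mem_head.
- by move=> t; rewrite orbit_step; apply: le_trans (l1normD _ _) _; rewrite l1normZ addrC.
Qed.

End Spectral.

Section SchurStable.
Local Open Scope ring_scope.
Local Open Scope complex_scope.

Lemma rsumE n f : rsum n f = \sum_(i < n) f i.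
Proof. by elim: n => [|n IH]; rewrite ?big_ord0 // big_ord_recr /= -IH. Qed.

Lemma Re_sum n (F : 'I_n -> R[i]) : complex.Re (\sum_(j < n) F j) = \sum_(j < n) complex.Re (F j).
Proof.
elim: n F => [|n IH] F; first by rewrite !big_ord0.
by rewrite !big_ord_recr -IH; move: (\sum_(j < n) _) (F ord_max) => [a b] [c d].
Qed.

Lemma Im_sum n (F : 'I_n -> R[i]) : complex.Im (\sum_(j < n) F j) = \sum_(j < n) complex.Im (F j).
Proof.
elim: n F => [|n IH] F; first by rewrite !big_ord0.
by rewrite !big_ord_recr -IH; move: (\sum_(j < n) _) (F ord_max) => [a b] [c d].
Qed.

Lemma normc_real (x : R) : Normc.normc x%:C = `|x|.
Proof. by rewrite /Normc.normc /= expr0n /= addr0 sqrtr_sqr. Qed.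

Variables (N : nat) (M : mat).

(* With row vectors, [v *m Mc] is [M] applied to [v]: [Mc] is the transpose of [M]. *)
Let Mc : 'M[R[i]]_N.+1 := \matrix_(i, j) (M j i)%:C.

Lemma eigenvalue_complexified (r : R[i]) :
  eigenvalue Mc r -> is_eigenvalue N.+1 M (complex.Re r) (complex.Im r).
Proof.
move=> /eigenvalueP [v v_eigen v_neq0].
pose x i := complex.Re (v 0 (inord i)); pose y i := complex.Im (v 0 (inord i)).
have row_eq (i : 'I_N.+1) : \sum_(j < N.+1) v 0 j * (M i j)%:C = r * v 0 i.
  by move/rowP: v_eigen => /(_ i); rewrite !mxE => <-; apply: eq_bigr => j _; rewrite mxE.
exists x, y; split.
  have [i vi_neq0] : exists i, v 0 i != 0.
    apply/existsP; move: v_neq0; apply: contraR; rewrite negb_exists => /forallP v0.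
    by apply/eqP/rowP => j; rewrite mxE; apply/eqP; move: (v0 j); rewrite negbK.
  exists (val i); split; first by apply/ssrnat.ltP; exact: ltn_ord.
  rewrite /x /y inord_val; move: vi_neq0; case: (v 0 i) => a b /=.
  case: (Req_EM_T a 0) => [->|]; last by left.
  case: (Req_EM_T b 0) => [->|]; last by right.
  by rewrite eqxx.
move=> i /ssrnat.ltP lt_iN; pose i' : 'I_N.+1 := Ordinal lt_iN.
have i'E : inord i = i' by apply: val_inj; rewrite /= inordK.
split.
  have -> : mvec N.+1 M x i = \sum_(j < N.+1) complex.Re (v 0 j * (M i' j)%:C).
    rewrite /mvec rsumE; apply: eq_bigr => j _; rewrite /x inord_val.
    by case: (v 0 j) => c d /=; rewrite mulr0 subr0 mulrC.
  rewrite -Re_sum row_eq /x /y i'E; case: (r) => a b; case: (v 0 i') => c d /=.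
  by rewrite -RminusE -!RmultE.
have -> : mvec N.+1 M y i = \sum_(j < N.+1) complex.Im (v 0 j * (M i' j)%:C).
  rewrite /mvec rsumE; apply: eq_bigr => j _; rewrite /y inord_val.
  by case: (v 0 j) => c d /=; rewrite mulr0 add0r mulrC.
rewrite -Im_sum row_eq /x /y i'E; case: (r) => a b; case: (v 0 i') => c d /=.
by rewrite -RplusE -!RmultE Rplus_comm.
Qed.

Lemma orbit_complexified (z : vec) k (i : 'I_N.+1) :
  ((\row_j (z j)%:C) *m Mc ^+ k) 0 i = (Nat.iter k (mvec N.+1 M) z i)%:C.
Proof.
elim: k i => [|k IH] i; first by rewrite expr0 mulmx1 mxE.
rewrite exprSr mulmxA mxE /= /mvec rsumE rmorph_sum /=.
by apply: eq_bigr => j _; rewrite IH mxE rmorphM /= mulrC.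
Qed.

Lemma schur_stable_complexified : schur_stable N.+1 M ->
  forall r, root (char_poly Mc) r -> Normc.normc r < 1.
Proof.
move=> stableM r; rewrite -eigenvalue_root_char => /eigenvalue_complexified /stableM.
case: r => a b /= /RltP ab_lt1.
by rewrite -sqrtr1 ltr_sqrt // !expr2.
Qed.

(* Cayley-Hamilton: [char_poly Mc] splits with roots of modulus < 1 and annihilates [Mc]. *)
Lemma summable_orbits_complexified : schur_stable N.+1 M -> summable_orbits N.+1 M.
Proof.
move=> stableM z.
have [rs char_split] := closed_field_poly_normal (char_poly Mc).
rewrite (monicP (char_poly_monic Mc)) scale1r in char_split.
have roots_lt1 r : r \in rs -> Normc.normc r < 1.
  by move=> r_in; apply: schur_stable_complexified; rewrite // char_split root_prod_XsubC.
have u_ann : (\row_j (z j)%:C) *m horner_mx Mc (\prod_(r <- rs) ('X - r%:P)) = 0.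
  by rewrite -char_split Cayley_Hamilton mulmx0.
have [K HK] := l1norm_orbit_bounded roots_lt1 u_ann.
exists K => k; apply/RleP; apply: le_trans (HK k); rewrite rsumE le_eqVlt; apply/orP; left.
apply/eqP; apply: eq_bigr => t _; rewrite rsumE /l1norm; apply: eq_bigr => i _.
by rewrite orbit_complexified normc_real.
Qed.

End SchurStable.

Lemma summable_orbits_of_schur_stable N M : schur_stable N M -> summable_orbits N M.
Proof.
case: N => [|N]; last exact: summable_orbits_complexified.
move=> _ z; exists 0 => k; rewrite (rsum_ext k _ (fun _ => 0)) // rsum_zero; exact: Rle_refl.
Qed.

Theorem mainTheorem1 (m p q : nat) (S : nat -> list nat -> vec) :
  ((exists n A B C, is_rep m p q S n A B C /\ stable m n A) ->
     square_summable m p q S) /\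
  (square_summable m p q S ->
     forall n A B C, minimal_rep m p q S n A B C -> stable m n A).
Proof.
split.
- intros [n [A [B [C [HR stableA]]]]].
  exact (square_summable_of_summable_orbits m p q S n A B C HR
           (summable_orbits_of_schur_stable stableA)).
- intros HSS n A B C Hmin.
  exact (schur_stable_of_summable_orbits _ _ (minimal_summable_orbits m p q S n A B C HSS Hmin)).
Qed.
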